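(* Let $\alpha,\beta,\gamma$ be partitions with $\alpha_1\le 2$ and let $\Gamma$ be an LR-tableau of type $(\alpha,\beta,\gamma)$; let $x$ be the number of entries $1$ in $\Gamma$. Assume: (1) the number of entries $2$ in $\Gamma$ equals $x$ or $x-1$; (2) every row of $\Gamma$ contains at most one (non-empty) box; (3) if row $j$ contains an entry $2$ and row $i$ contains an entry $1$, then $j>i$. Then there is a bijection between $\mathcal D_\Gamma$ and the set $S_x$ of permutations of $x$ elements.
   Context: For a partition $\lambda$, $\lambda'$ is its conjugate; the diagram of $\lambda$ is drawn with $\lambda'_i$ boxes in row $i$, so the $i$-th row of $\beta\setminus\gamma$ consists of the boxes in columns $\gamma'_i+1,\dots,\beta'_i$. With $\alpha_1\le2$, $\alpha'=(\alpha'_1,\alpha'_2)$. An LR-tableau of type $(\alpha,\beta,\gamma)$ is a filling of $\beta\setminus\gamma$ with $\alpha'_1$ entries $1$ and $\alpha'_2$ entries $2$, weakly increasing along rows, strictly increasing down columns, such that for each $c\ge0$ the number of entries $1$ in columns to the right of column $c$ is at least the number of entries $2$ there. An arc is a pair $(m,n)$, $m>n$ positive integers (source $m$, target $n$); a pole at $n$ is regarded as an arc $(\infty,n)$. An arc diagram of type $(\alpha,\beta,\gamma)$ is a finite multiset of $\alpha'_2$ arcs and $\alpha'_1-\alpha'_2$ poles with, for each $i$, exactly $\beta'_i-\gamma'_i$ members having source or target $i$. It has LR type $\Gamma$ if for each $i$ the number of arcs with source $i$ equals the number of entries $2$ in row $i$ of $\Gamma$; $\mathcal D_\Gamma$ is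 the set of arc diagrams of type $(\alpha,\beta,\gamma)$ of LR type $\Gamma$. *)

From mathcomp Require Import all_boot all_fingroup.
From mathcomp.finmap Require Import finmap multiset.

Set Implicit Arguments.
Unset Strict Implicit.
Unset Printing Implicit Defensive.
Open Scope mset_scope.
Open Scope nat_scope.

Definition is_partition (l : seq nat) : bool :=
  sorted geq l && all (fun p => 0 < p) l.

(* lambda_c, 1-indexed (0 beyond the length). *)
Definition part (l : seq nat) (c : nat) : nat := nth 0 l c.-1.

Definition conj (l : seq nat) (i : nat) : nat := count (fun p => i <= p) l.

Definition subpartition (g b : seq nat) : Prop :=
  forall c, 0 < c -> part g c <= part b c.

(* The box (i, c) (row i, column c, both >= 1) lies in beta \ gamma:
   row i consists of the columns gamma'_i + 1, ..., beta'_i. *)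
Definition in_skew (b g : seq nat) (i c : nat) : bool :=
  (0 < i) && (conj g i < c <= conj b i).

Definition skew_bound (b : seq nat) : nat := sumn b + size b.
Definition skew_boxes (b g : seq nat) : seq (nat * nat) :=
  [seq ic <- [seq (i, c) | i <- iota 1 (skew_bound b), c <- iota 1 (skew_bound b)]
   | in_skew b g ic.1 ic.2].

(* A filling of beta \ gamma is a function T : row -> column -> entry;
   only its values on the boxes of beta \ gamma are relevant. *)
Definition filling := nat -> nat -> nat.

Definition num_entries (b g : seq nat) (T : filling) (v : nat) : nat :=
  count (fun ic => T ic.1 ic.2 == v) (skew_boxes b g).

Definition num_entries_row (b g : seq nat) (T : filling) (v i : nat) : nat :=
  count (fun ic => (ic.1 == i) && (T ic.1 ic.2 == v)) (skew_boxes b g).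

Definition num_entries_right (b g : seq nat) (T : filling) (v c : nat) : nat :=
  count (fun ic => (c < ic.2) && (T ic.1 ic.2 == v)) (skew_boxes b g).

Definition a1 (a : seq nat) : nat := conj a 1.
Definition a2 (a : seq nat) : nat := conj a 2.

Definition is_LR_tableau (a b g : seq nat) (T : filling) : Prop :=
  subpartition g b /\
  (forall i c, in_skew b g i c -> T i c = 1 \/ T i c = 2) /\
  num_entries b g T 1 = a1 a /\
  num_entries b g T 2 = a2 a /\
  (forall i c, in_skew b g i c -> in_skew b g i c.+1 -> T i c <= T i c.+1) /\
  (forall i c, in_skew b g i c -> in_skew b g i.+1 c -> T i c < T i.+1 c) /\
  (forall c, num_entries_right b g T 2 c <= num_entries_right b g T 1 c).

(* Arcs: (Some m, n) is the arc (m, n) (source m, target n); (None, n) is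
   the pole at n, i.e. the arc (infinity, n). *)
Definition arcD := (option nat * nat)%type.

Definition is_arc (e : arcD) : bool :=
  match e with
  | (Some m, n) => (0 < n) && (n < m)
  | (None, n) => 0 < n
  end.

Definition is_pole (e : arcD) : bool := e.1 == None.

Definition has_source (i : nat) (e : arcD) : bool := e.1 == Some i.
Definition touches (i : nat) (e : arcD) : bool := has_source i e || (e.2 == i).

(* Members of a multiset are counted with multiplicity via enum_mset. *)
Definition is_arc_diagram (a b g : seq nat) (D : {mset arcD}) : Prop :=
  [/\ all is_arc (enum_mset D),
      count (fun e => ~~ is_pole e) (enum_mset D) = a2 a,
      count is_pole (enum_mset D) = a1 a - a2 a
    & forall i, 0 < i -> count (touches i) (enum_mset D) = conj b i - conj g i].

Definition in_D_Gamma (a b g : seq nat) (T : filling) (D : {mset arcD}) : Prop :=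
  is_arc_diagram a b g D /\
  forall i, 0 < i -> count (has_source i) (enum_mset D) = num_entries_row b g T 2 i.

(** Since every row of [beta \ gamma] has at most one box, each nonempty row
    carries exactly one entry: let [R1] be the rows containing a [1] and [R2]
    those containing a [2], so [|R1| = x] and [|R2| = y] with [y = x] or
    [y = x - 1]. An arc diagram of LR type [Gamma] touches each row of [R1]
    exactly once, necessarily as a target, and has exactly the rows of [R2] as
    sources; the remaining [x - y] members are poles. Listing the sources (the
    rows of [R2], then [x - y] copies of infinity) in a fixed order, a diagram is
    thus the same as a bijection from these [x] sources onto [R1], i.e. a
    permutation of [x] elements. Every such pairing is allowed because all rows of
    [R1] lie above all rows of [R2], so every source exceeds its target; and since
    [y >= x - 1] there is at most one pole, so the [x] sources are distinct and
    different permutations give different diagrams. *)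

From mathcomp Require Import all_boot all_fingroup.
From mathcomp.finmap Require Import finmap multiset.
From mathcomp Require Import zify.
From Stdlib Require Import ProofIrrelevance.
Open Scope mset_scope.
Open Scope nat_scope.
Set Implicit Arguments.
Unset Strict Implicit.

Lemma leq_sumn_mem (s : seq nat) p : p \in s -> p <= sumn s.
Proof.
elim: s => //= q s IH; rewrite in_cons => /orP [/eqP -> | /IH]; first exact: leq_addr.
by move/leq_trans; apply; apply: leq_addl.
Qed.

Lemma count_gt1 (T : eqType) (p : pred T) (l : seq T) e e' :
  e \in l -> e' \in l -> e' != e -> p e -> p e' -> 1 < count p l.
Proof.
move=> el el' ne pe pe'.
rewrite (seq.permP (perm_to_rem el)) /= pe add1n ltnS -has_count.
by apply/hasP; exists e'; first exact: rem_mem.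
Qed.

Lemma mem_skew_boxes b g i c : ((i, c) \in skew_boxes b g) = in_skew b g i c.
Proof.
rewrite /skew_boxes mem_filter /=.
case sk: (in_skew b g i c) => //=.
move: sk; rewrite /in_skew => /andP [i_gt0 /andP [c_gt c_le]].
have c_gt0 : 0 < c by apply: leq_ltn_trans c_gt.
have [p pb ip] : exists2 p, p \in b & i <= p.
  by apply/hasP; rewrite has_count -/(conj b i) (leq_trans c_gt0).
apply/allpairsP; exists (i, c); split => //; rewrite /= mem_iota /skew_bound add1n ltnS.
- by rewrite i_gt0 (leq_trans ip) // (leq_trans (leq_sumn_mem pb)) ?leq_addr.
- by rewrite c_gt0 (leq_trans c_le) // (leq_trans (count_size _ _)) ?leq_addl.
Qed.

Lemma uniq_skew_boxes b g : uniq (skew_boxes b g).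
Proof.
apply/filter_uniq/allpairs_uniq; rewrite ?iota_uniq //.
by move=> [? ?] [? ?] _ _ [-> ->].
Qed.

Section ThinSkewShape.
Variables (b g : seq nat) (T : filling).
Hypothesis thin : forall i, 0 < i -> conj b i - conj g i <= 1.
Hypothesis entry12 : forall i c, in_skew b g i c -> T i c = 1 \/ T i c = 2.

Definition rows_with (v : nat) : seq nat :=
  [seq ic.1 | ic <- skew_boxes b g & T ic.1 ic.2 == v].

Lemma rows_withP v i :
  reflect (exists2 c, in_skew b g i c & T i c = v) (i \in rows_with v).
Proof.
apply: (iffP mapP) => [[[i' c]] | [c sk Tv]].
- by rewrite mem_filter mem_skew_boxes => /andP [/eqP Tv sk] ->; exists c.
- by exists (i, c); rewrite // mem_filter mem_skew_boxes sk Tv eqxx.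
Qed.

Lemma size_rows_with v : size (rows_with v) = num_entries b g T v.
Proof. by rewrite size_map size_filter. Qed.

Lemma rows_with_gt0 v i : i \in rows_with v -> 0 < i.
Proof. by case/rows_withP => c /andP []. Qed.

Lemma skew_box_unique i c c' : in_skew b g i c -> in_skew b g i c' -> c = c'.
Proof. by case/andP => /thin; rewrite /in_skew; lia. Qed.

Lemma uniq_rows_with v : uniq (rows_with v).
Proof.
rewrite map_inj_in_uniq; first exact/filter_uniq/uniq_skew_boxes.
move=> [i c] [i' c']; rewrite !mem_filter /=.
by move=> /and3P [_ sk _] /and3P [_ + _] eii'; rewrite -eii' => /(skew_box_unique sk) ->.
Qed.

Lemma skew_row_length i :
  0 < i -> conj b i - conj g i = (i \in rows_with 1) + (i \in rows_with 2).
Proof.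
move=> i_gt0; have := thin i_gt0.
case: (rows_withP 1 i) => [[c sk1 T1] | no1]; case: (rows_withP 2 i) => [[c' sk2 T2] | no2].
- by rewrite -(skew_box_unique sk1 sk2) T1 in T2.
- by case/andP: sk1; lia.
- by case/andP: sk2; lia.
case: (ltnP (conj g i) (conj b i)) => [lt_gb _ | ]; last by rewrite -subn_eq0 => /eqP.
have sk : in_skew b g i (conj b i) by rewrite /in_skew i_gt0 lt_gb leqnn.
by case: (entry12 sk) => Tv; [case: no1 | case: no2]; exists (conj b i).
Qed.

Lemma num_entries_row_2 i : num_entries_row b g T 2 i = (i \in rows_with 2).
Proof.
rewrite -count_uniq_mem ?uniq_rows_with // count_map count_filter.
by apply: eq_count => -[i' c] /=; rewrite andbC eq_sym.
Qed.

End ThinSkewShape.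

(* No arc has the same row as source and target, so touching splits. *)
Lemma count_touches (l : seq arcD) i : all is_arc l ->
  count (touches i) l = count (has_source i) l + count (fun e => e.2 == i) l.
Proof.
elim: l => //= -[[m|] n] l IH /andP [arc_e arc_l]; rewrite IH // /touches /has_source /=.
- have [eni|_] := eqVneq n i; last by rewrite orbF addnA.
  move: arc_e => /andP [_]; rewrite eni -[Some m == Some i]/(m == i) => /gtn_eqF ->.
  by rewrite add0n addnCA.
- by rewrite add0n addnCA.
Qed.

Section DiagramsOfPermutations.
Variables (a b g : seq nat) (T : filling).
Hypothesis thin : forall i, 0 < i -> conj b i - conj g i <= 1.
Hypothesis entry12 : forall i c, in_skew b g i c -> T i c = 1 \/ T i c = 2.
Local Notation R1 := (rows_with b g T 1).
Local Notation R2 := (rows_with b g T 2).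
Local Notation x := (num_entries b g T 1).
Local Notation y := (num_entries b g T 2).
Hypothesis rows_1_above_2 : forall i j, i \in R1 -> j \in R2 -> i < j.
Hypothesis y_eq : y = x \/ y = x.-1.
Hypothesis x_eq_a1 : x = a1 a.
Hypothesis y_eq_a2 : y = a2 a.

Lemma leq_y_x : y <= x.
Proof. by case: y_eq => ->; rewrite ?leq_pred. Qed.

Definition arc_source (k : nat) : option nat := if k < y then Some (nth 0 R2 k) else None.

Lemma arc_source_inj k k' : k < x -> k' < x -> arc_source k = arc_source k' -> k = k'.
Proof.
rewrite /arc_source => lt_kx lt_k'x; case: ifP => lt_ky; case: ifP => lt_k'y //.
- by case=> /eqP; rewrite nth_uniq ?size_rows_with ?uniq_rows_with // => /eqP.
- have le_x_y1 : x <= y.+1 by case: y_eq => ->; rewrite ?leqnSn ?leqSpred.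
  move=> _; apply/eqP; rewrite eqn_leq; apply/andP; split; rewrite -ltnS.
  + by rewrite (leq_trans lt_kx (leq_trans le_x_y1 _)) // ltnS leqNgt lt_k'y.
  + by rewrite (leq_trans lt_k'x (leq_trans le_x_y1 _)) // ltnS leqNgt lt_ky.
Qed.

Definition diagram_arcs (s : {perm 'I_x}) : seq arcD :=
  [seq (arc_source k, nth 0 R1 (s k)) | k : 'I_x <- enum 'I_x].

Definition diagram (s : {perm 'I_x}) : {mset arcD} := seq_mset (diagram_arcs s).

Lemma sources_diagram_arcs s :
  map fst (diagram_arcs s) = map Some R2 ++ nseq (x - y) None.
Proof.
rewrite -map_comp (map_comp arc_source val) val_enum_ord.
rewrite -(subnKC leq_y_x) iotaD map_cat add0n subnKC ?leq_y_x //; congr (_ ++ _).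
- rewrite -[in RHS](mkseq_nth 0 R2) size_rows_with -map_comp.
  by apply/eq_in_map => k; rewrite mem_iota /arc_source /= => ->.
- apply: (@eq_from_nth _ None) => [|k]; rewrite size_map size_iota ?size_nseq // => lt_k.
  by rewrite (nth_map 0) ?size_iota // nth_iota // nth_nseq lt_k /arc_source ltnNge leq_addr.
Qed.

Lemma targets_diagram_arcs s : perm_eq (map snd (diagram_arcs s)) R1.
Proof.
have perm_s : perm_eq (map s (enum 'I_x)) (enum 'I_x).
  apply: uniq_perm; rewrite ?enum_uniq ?(map_inj_uniq (@perm_inj _ s)) ?enum_uniq //.
  by move=> j; rewrite mem_enum -[j](permKV s) map_f ?mem_enum.
rewrite -map_comp (map_comp (nth 0 R1 \o val) s).
rewrite (perm_trans (perm_map _ perm_s)) // map_comp val_enum_ord.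
by rewrite -{2}(mkseq_nth 0 R1) size_rows_with.
Qed.

Lemma all_arcs_diagram_arcs s : all is_arc (diagram_arcs s).
Proof.
apply/allP => _ /mapP [k _ ->].
have R1t : nth 0 R1 (s k) \in R1 by rewrite mem_nth ?size_rows_with.
rewrite /arc_source; case: ifP => lt_ky /=; rewrite (rows_with_gt0 R1t) //.
by rewrite rows_1_above_2 // mem_nth ?size_rows_with.
Qed.

Lemma count_sources_diagram_arcs s (p : pred (option nat)) :
  count (fun e => p e.1) (diagram_arcs s) = count (fun j => p (Some j)) R2 + p None * (x - y).
Proof. by rewrite -(count_map fst) sources_diagram_arcs count_cat count_map count_nseq. Qed.

Lemma diagram_in_D_Gamma s : in_D_Gamma a b g T (diagram s).
Proof.
have count_diagram p : count p (enum_mset (diagram s)) = count p (diagram_arcs s).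
  exact/seq.permP/perm_eq_seq_mset.
have sources_i i : count (has_source i) (diagram_arcs s) = (i \in R2).
  by rewrite count_sources_diagram_arcs addn0 -count_uniq_mem ?uniq_rows_with.
split; [split|] => [||| i i_gt0 | i i_gt0]; rewrite ?count_diagram.
- by rewrite (perm_all _ (perm_eq_seq_mset _)) all_arcs_diagram_arcs.
- rewrite (count_sources_diagram_arcs s (fun o => o != None)) addn0.
  by rewrite count_predT size_rows_with.
- rewrite (count_sources_diagram_arcs s (fun o => o == None)) mul1n.
  by rewrite count_pred0 -x_eq_a1 -y_eq_a2.
- rewrite count_touches ?all_arcs_diagram_arcs // (skew_row_length thin entry12 i_gt0).
  rewrite sources_i addnC.
  rewrite -(count_map snd (pred1 i)) (seq.permP (targets_diagram_arcs s)).
  by rewrite count_uniq_mem ?uniq_rows_with.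
- by rewrite (num_entries_row_2 T thin).
Qed.

Lemma diagram_inj : injective diagram.
Proof.
move=> s s' /eq_seq_msetP eq_arcs; apply/permP => k.
have : (arc_source k, nth 0 R1 (s k)) \in diagram_arcs s'.
  by rewrite -(perm_mem eq_arcs); apply/mapP; exists k; rewrite ?mem_enum.
case/mapP => k' _ [/arc_source_inj eq_kk' eq_target].
have eq_k : k = k' by apply/val_inj/eq_kk'.
rewrite -{k' eq_kk'}eq_k in eq_target.
apply/val_inj/eqP.
by rewrite -(nth_uniq 0 _ _ (uniq_rows_with T thin 1)) ?size_rows_with ?ltn_ord ?eq_target.
Qed.

Section PermutationOfDiagram.
Variable D : {mset arcD}.
Hypothesis D_Gamma : in_D_Gamma a b g T D.
Local Notation arcs := (enum_mset D).

Lemma count_targets i : 0 < i -> count (fun e => e.2 == i) arcs = (i \in R1).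
Proof.
case: D_Gamma => [[all_arcs _ _ touches_eq] sources_eq] i_gt0.
have := touches_eq i i_gt0.
rewrite count_touches // sources_eq // (num_entries_row_2 T thin).
rewrite (skew_row_length thin entry12 i_gt0) [in RHS]addnC.
by move/eqP; rewrite eqn_add2l => /eqP.
Qed.

Lemma target_in_rows_1 e : e \in arcs -> e.2 \in R1.
Proof.
case: D_Gamma => [[all_arcs _ _ _] _] arc_e.
have e2_gt0 : 0 < e.2.
  by move: (allP all_arcs e arc_e); case: e arc_e => -[m|] n _ //= /andP [].
by rewrite -[_ \in R1]lt0b -count_targets // -has_count; apply/hasP; exists e.
Qed.

Lemma has_arc_source (k : 'I_x) : has (fun e => e.1 == arc_source k) arcs.
Proof.
case: D_Gamma => [[_ _ poles_eq _] sources_eq]; rewrite has_count /arc_source.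
case: ifP => lt_ky.
- have R2k : nth 0 R2 k \in R2 by rewrite mem_nth ?size_rows_with.
  by rewrite (sources_eq _ (rows_with_gt0 R2k)) (num_entries_row_2 T thin) R2k.
- rewrite poles_eq -x_eq_a1 -y_eq_a2 subn_gt0.
  by rewrite (leq_trans _ (ltn_ord k)) // ltnS leqNgt lt_ky.
Qed.

Definition arc_from (k : 'I_x) : arcD :=
  nth (None, 0) arcs (find (fun e => e.1 == arc_source k) arcs).

Lemma arc_from_mem k : arc_from k \in arcs.
Proof. by rewrite mem_nth // -has_find has_arc_source. Qed.

Lemma arc_from_source k : (arc_from k).1 = arc_source k.
Proof. exact/eqP/(nth_find _ (has_arc_source k)). Qed.

Lemma index_target_lt k : index (arc_from k).2 R1 < x.
Proof. by rewrite -(size_rows_with b g T 1) index_mem target_in_rows_1 ?arc_from_mem. Qed.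

Definition target_index (k : 'I_x) : 'I_x := Ordinal (index_target_lt k).

Lemma target_index_inj : injective target_index.
Proof.
move=> k k' /(congr1 val) /= eq_index.
have eq_target : (arc_from k').2 = (arc_from k).2.
  by rewrite -(nth_index 0 (target_in_rows_1 (arc_from_mem k'))) -eq_index nth_index
    ?target_in_rows_1 ?arc_from_mem.
apply/eqP/contraT => neq_kk'.
have neq_arcs : arc_from k' != arc_from k.
  apply: contraNneq neq_kk' => /(congr1 fst); rewrite !arc_from_source.
  by move/arc_source_inj => /(_ (ltn_ord k') (ltn_ord k)) /val_inj ->.
have target_gt0 : 0 < (arc_from k).2.
  exact/rows_with_gt0/target_in_rows_1/arc_from_mem.
have := count_gt1 (p := fun e => e.2 == (arc_from k).2)
  (arc_from_mem k) (arc_from_mem k') neq_arcs (eqxx _) (introT eqP eq_target).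
by rewrite count_targets //; case: (_ \in R1).
Qed.

Definition perm_of_diagram : {perm 'I_x} := perm target_index_inj.

Lemma perm_of_diagramK : diagram perm_of_diagram = D.
Proof.
rewrite -[RHS]seq_mset_id; apply/eq_seq_msetP.
have sub : {subset diagram_arcs perm_of_diagram <= arcs}.
  move=> _ /mapP [k _ ->]; rewrite permE /= nth_index ?target_in_rows_1 ?arc_from_mem //.
  by rewrite -arc_from_source -surjective_pairing arc_from_mem.
have uniq_arcs : uniq (diagram_arcs perm_of_diagram).
  rewrite map_inj_uniq ?enum_uniq // => k k' [/arc_source_inj eq_kk' _].
  exact/val_inj/eq_kk'.
have size_arcs : size arcs = size (diagram_arcs perm_of_diagram).
  case: D_Gamma => [[_ arcs_eq poles_eq _] _].
  rewrite size_map size_enum_ord -(count_predC is_pole) poles_eq.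
  by rewrite [count _ _]arcs_eq -x_eq_a1 -y_eq_a2 subnK ?leq_y_x.
have [_ uniq_D] := uniq_min_size uniq_arcs sub (eq_leq size_arcs).
by apply: uniq_perm; rewrite // (uniq_size_uniq uniq_arcs uniq_D) size_arcs.
Qed.
End PermutationOfDiagram.

End DiagramsOfPermutations.

Theorem mainTheorem6 (a b g : seq nat) (T : filling) :
  is_partition a -> is_partition b -> is_partition g ->
  all (fun p => p <= 2) a ->
  is_LR_tableau a b g T ->
  let x := num_entries b g T 1 in
  (num_entries b g T 2 = x \/ num_entries b g T 2 = x.-1) ->
  (forall i, 0 < i -> conj b i - conj g i <= 1) ->
  (forall i j c d, in_skew b g j c -> T j c = 2 ->
                   in_skew b g i d -> T i d = 1 -> i < j) ->
  exists f : {perm 'I_x} -> {D : {mset arcD} | in_D_Gamma a b g T D},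
    bijective f.
Proof.
move=> _ _ _ _ [_ [entry12 [a1_eq [a2_eq _]]]] x y_eq thin rows_ordered.
have rows_1_above_2 i j : i \in rows_with b g T 1 -> j \in rows_with b g T 2 -> i < j.
  by case/rows_withP => d sk1 T1 /rows_withP [c sk2 T2]; apply: rows_ordered sk2 T2 sk1 T1.
have in_D := diagram_in_D_Gamma thin entry12 rows_1_above_2 y_eq a1_eq a2_eq.
have diagramK := perm_of_diagramK thin entry12 y_eq a1_eq a2_eq.
exists (fun s => exist _ (diagram s) (in_D s)).
exists (fun D => perm_of_diagram thin entry12 y_eq a1_eq a2_eq (proj2_sig D)).
- move=> s; apply: (diagram_inj thin y_eq); exact: diagramK.
- move=> [D D_Gamma] /=; move: (in_D _); rewrite diagramK => ?.
  by congr exist; apply: proof_irrelevance.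
Qed.
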